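(* For any integrable kernel $\kappa$ on a type space $(\mathcal S,\mu)$ we have, for $x\in\mathcal S$, $\chi(\kappa;x)=\sum_{j=0}^\infty T_\kappa^j1(x)$, $\quad\chi(\kappa)=\mu(\mathcal S)^{-1}\sum_{j=0}^\infty\int_{\mathcal S}T_\kappa^j1\,d\mu=\mu(\mathcal S)^{-1}\sum_{j=0}^\infty\langle T_\kappa^j1,1\rangle_\mu$, $\hat\chi(\kappa;x)=(1-\rho(\kappa;x))\sum_{j=0}^\infty\hat T_\kappa^j1(x)$, $\quad\hat\chi(\kappa)=\mu(\mathcal S)^{-1}\sum_{j=0}^\infty\int_{\mathcal S}\hat T_\kappa^j1\,d\hat\mu=\mu(\mathcal S)^{-1}\sum_{j=0}^\infty\langle\hat T_\kappa^j1,1\rangle_{\hat\mu}$.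
   Context: A type space is a measure space $(\mathcal S,\mu)$ with $0<\mu(\mathcal S)<\infty$; a kernel is a symmetric measurable $\kappa:\mathcal S^2\to[0,\infty)$, integrable if $\int_{\mathcal S^2}\kappa<\infty$; it is assumed that $\int\kappa(x,y)\,d\mu(y)<\infty$ for every $x$. The branching process $\mathfrak X_\kappa(x)$ starts with one particle of type $x$; each particle of type $y$ independently has children whose types form a Poisson process on $\mathcal S$ with intensity $\kappa(y,z)\,d\mu(z)$; $|\mathfrak X_\kappa(x)|\in\{1,2,\dots,\infty\}$ is the total population. $\rho(\kappa;x)=\mathbb P(|\mathfrak X_\kappa(x)|=\infty)$, $\chi(\kappa;x)=\mathbb E|\mathfrak X_\kappa(x)|$, $\hat\chi(\kappa;x)=\mathbb E(|\mathfrak X_\kappa(x)|;|\mathfrak X_\kappa(x)|<\infty)$, $\chi(\kappa)=\mu(\mathcal S)^{-1}\int\chi(\kappa;x)d\mu(x)$, $\hat\chi(\kappa)=\mu(\mathcal S)^{-1}\int\hat\chi(\kappa;x)d\mu(x)$. $T_\kappa f(x)=\int\kappa(x,y)f(y)\,d\mu(y)$ (defined in $[0,\infty]$ for $f\ge0$); $1$ is the constant function; $\langle f,g\rangle_\nu=\int fg\,d\nu$. $\hat\mu$ is the measure $d\hat\mu(x)=(1-\rho(\kappa;x))\,d\mu(x)$ and $\hat T_\kappa f=T_\kappa\big(f(1-\rho(\kappa;\cdot))\big)$, i.e. the integral operator with kernel $\kappa$ with respect to $\hat\mu$. *)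

From HB Require Import structures.
From mathcomp Require Import all_boot all_order all_algebra.
From mathcomp Require Import all_classical all_reals all_analysis.
Set Implicit Arguments. Unset Strict Implicit. Unset Printing Implicit Defensive.
Import Order.TTheory GRing.Theory Num.Theory.
Local Open Scope classical_set_scope.
Local Open Scope ring_scope.
Local Open Scope ereal_scope.

Section branching.
Context {d : measure_display} {T : measurableType d} {R : realType}.
Variable mu : {measure set T -> \bar R}.
Variable kappa : T -> T -> R.

Definition Tk (f : T -> \bar R) : T -> \bar R :=
  fun x => \int[mu]_y ((kappa x y)%:E * f y).

Definition wint (w f : T -> \bar R) : \bar R := \int[mu]_x (w x * f x).

Definition wip (w f g : T -> \bar R) : \bar R := \int[mu]_x (w x * (f x * g x)).

Fixpoint multint (k : nat) (G : seq T -> \bar R) : \bar R :=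
  match k with
  | 0%N => G [::]
  | k'.+1 => \int[mu]_z multint k' (fun zs => G (z :: zs))
  end.

Definition lam (y : T) : R := fine (\int[mu]_z (kappa y z)%:E).

(** Expectation of F(children of a particle of type y): the children types form
    a Poisson process with (finite) intensity kappa(y,z) dmu(z), i.e. their number
    is Poisson(lam y) and, given it equals k, they are i.i.d. with law
    kappa(y,z) dmu(z) / lam y. *)
Definition childE (y : T) (F : seq T -> \bar R) : \bar R :=
  (expR (- lam y))%:E *
  \sum_(0 <= k <oo)
     ((k`!%:R)^-1%:E * multint k (fun zs => F zs * (\prod_(z <- zs) kappa y z)%:E)).

(** Expectation of F(next generation) given the current generation ys:
    particles reproduce independently, children lists are concatenated. *)
Fixpoint offE (ys : seq T) (F : seq T -> \bar R) : \bar R :=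
  match ys with
  | [::] => F [::]
  | y :: ys' => childE y (fun c => offE ys' (fun c' => F (c ++ c')))
  end.

(** Expectation of G(Z_1,...,Z_n) for the generation process started from
    generation Z_0 = zs. *)
Fixpoint pathE (n : nat) (zs : seq T) (G : seq (seq T) -> \bar R) : \bar R :=
  match n with
  | 0%N => G [::]
  | n'.+1 => offE zs (fun z1 => pathE n' z1 (fun rest => G (z1 :: rest)))
  end.

(** Number of particles in generations 0..n of a path started from one particle. *)
Definition popsize (p : seq (seq T)) : \bar R := ((1 + sumn (map size p))%N%:R)%:E.

(** Indicator that the last generation of the path (Z_0 = [x]) is empty. *)
Definition extinct_by (x : T) (p : seq (seq T)) : bool := nilp (last [:: x] p).

(** chi(kappa;x) = E |X_kappa(x)| = lim_n E(#particles in generations 0..n). *)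
Definition chi_x (x : T) : \bar R :=
  ereal_sup (range (fun n => pathE n [:: x] popsize)).

(** rho(kappa;x) = P(|X_kappa(x)| = oo) = lim_n P(Z_n nonempty). *)
Definition rho_x (x : T) : \bar R :=
  ereal_inf (range (fun n => pathE n [:: x]
                     (fun p => if extinct_by x p then 0 else 1))).

(** hat chi(kappa;x) = E(|X|; |X| < oo) = lim_n E(|X|; Z_n empty). *)
Definition chihat_x (x : T) : \bar R :=
  ereal_sup (range (fun n => pathE n [:: x]
                     (fun p => if extinct_by x p then popsize p else 0))).

Definition chi_avg : \bar R := ((fine (mu setT))^-1)%:E * \int[mu]_x chi_x x.
Definition chihat_avg : \bar R := ((fine (mu setT))^-1)%:E * \int[mu]_x chihat_x x.

(** weight 1 - rho of the measure hat mu, and hat T_kappa f = T_kappa (f (1-rho)). *)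
Definition hatw (x : T) : \bar R := 1 - rho_x x.
Definition That (f : T -> \bar R) : T -> \bar R := Tk (fun y => f y * hatw y).

End branching.

From HB Require Import structures.
From mathcomp Require Import all_boot all_order all_algebra.
From mathcomp Require Import all_classical all_reals all_analysis.
From mathcomp Require Import measurable_realfun ring.
Import Order.TTheory GRing.Theory Num.Theory.
Import numFieldNormedType.Exports.
Local Open Scope classical_set_scope.
Local Open Scope ring_scope.
Local Open Scope ereal_scope.

(* The children of a particle of type y form a Poisson process with intensity
   kappa(y,z) dmu(z), so for measurable phi : S -> [0,1] and g >= 0
     E prod_(children z) phi z = exp (int kappa(y,z) (phi z - 1) dmu(z)) =: G phi y,
     E [prod_(children) phi * sum_(children) g] = G phi y * int kappa(y,z) phi(z) g(z) dmu(z).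
   Iterating over generations, extinction by generation n has probability
   q_n = G^n 0, and the expected size of generations 0..n, weighted by the
   product of q over generation n, is 1 + u_n with u_(n+1) = T_kappa (G^n q * (1 + u_n)).
   For q = 1 these are the partial sums of sum_j T_kappa^j 1.  For q = 0, q_n
   increases to 1 - rho and 1 + u_n to some V with V = 1 + hat T_kappa V by
   monotone convergence; V is then squeezed between the partial sums of
   sum_j hat T_kappa^j 1 and their limit.  Integrating term by term gives the
   averaged identities. *)

Section multint_moments.
Context d (T : measurableType d) (R : realType) (mu : {measure set T -> \bar R}).

Lemma multint_prod_lin (f1 f2 : T -> R) (k : nat) (a b : R) :
  mu.-integrable setT (EFin \o f1) -> mu.-integrable setT (EFin \o f2) ->
  multint mu k (fun zs => (a * \prod_(z <- zs) f1 z + b * \prod_(z <- zs) f2 z)%:E)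
  = (a * (fine (\int[mu]_z (f1 z)%:E)) ^+ k
     + b * (fine (\int[mu]_z (f2 z)%:E)) ^+ k)%:E.
Proof.
move=> i1 i2; set J1 := fine _; set J2 := fine _.
have E1 : \int[mu]_z (f1 z)%:E = J1%:E by rewrite fineK//; exact: integrable_fin_num.
have E2 : \int[mu]_z (f2 z)%:E = J2%:E by rewrite fineK//; exact: integrable_fin_num.
elim: k a b => [|k IH] a b /=; first by rewrite !big_nil !expr0 !mulr1.
transitivity (\int[mu]_z ((a * J1 ^+ k)%:E * (f1 z)%:E + (b * J2 ^+ k)%:E * (f2 z)%:E)).
  apply: eq_integral => z _; rewrite -!EFinM -EFinD.
  have -> : (a * J1 ^+ k * f1 z + b * J2 ^+ k * f2 z
             = (a * f1 z) * J1 ^+ k + (b * f2 z) * J2 ^+ k)%R by ring.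
  rewrite -IH; congr (multint _ _ _); apply/funext => zs.
  by rewrite !big_cons; congr (_%:E); ring.
rewrite integralD//; [|exact: integrableZl|exact: integrableZl].
rewrite !integralZl// E1 E2 -!EFinM -EFinD; congr (_%:E).
by rewrite !exprS; ring.
Qed.

Lemma integral_affine (f : T -> R) (g : T -> \bar R) (c B : R) (A : \bar R) :
  (forall z, 0 <= f z)%R -> measurable_fun setT f -> \int[mu]_z (f z)%:E < +oo ->
  (forall z, 0 <= g z) -> measurable_fun setT g -> (0 <= c)%R -> (0 <= B)%R -> 0 <= A ->
  \int[mu]_z ((c * f z)%:E * (A + B%:E * g z)) =
  c%:E * ((fine (\int[mu]_z (f z)%:E))%:E * A + B%:E * \int[mu]_z ((f z)%:E * g z)).
Proof.
move=> f0 mf fi g0 mg c0 B0 A0.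
have mfE : measurable_fun setT (EFin \o f) by exact/measurable_EFinP.
have fg0 z : 0 <= (f z)%:E * g z by rewrite mule_ge0 ?lee_fin.
have Jf0 : 0 <= \int[mu]_z (f z)%:E by apply: integral_ge0 => z _; rewrite lee_fin.
transitivity (\int[mu]_z ((c%:E * A) * (f z)%:E + (c * B)%:E * ((f z)%:E * g z))).
  apply: eq_integral => z _; rewrite ge0_muleDr ?mule_ge0 ?lee_fin// !EFinM.
  by congr (_ + _); [exact: muleAC|exact: muleACA].
rewrite ge0_integralD//; last 4 first.
- by move=> z _; rewrite mule_ge0 ?mule_ge0 ?lee_fin.
- exact: emeasurable_funM.
- by move=> z _; rewrite mule_ge0 ?lee_fin ?mulr_ge0.
- by apply: emeasurable_funM => //; exact: emeasurable_funM.
rewrite !ge0_integralZl ?mule_ge0 ?lee_fin ?mulr_ge0//; last 2 first.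
- exact: emeasurable_funM.
- by move=> z _; rewrite lee_fin.
have EJ : (fine (\int[mu]_z (f z)%:E))%:E = \int[mu]_z (f z)%:E.
  by rewrite fineK// ge0_fin_numE.
rewrite EJ (ge0_muleDr c%:E); last 2 first.
- exact: mule_ge0 Jf0 A0.
- by apply: mule_ge0; [rewrite lee_fin|apply: integral_ge0 => z _].
by rewrite EFinM !muleA (muleAC c%:E).
Qed.

Lemma multint_prod_sum (f : T -> R) (g : T -> \bar R) (k : nat) (c : R) (b : \bar R) :
  (forall z, 0 <= f z)%R -> measurable_fun setT f -> \int[mu]_z (f z)%:E < +oo ->
  (forall z, 0 <= g z) -> measurable_fun setT g -> (0 <= c)%R -> 0 <= b ->
  multint mu k (fun zs => c%:E * (\prod_(z <- zs) f z)%:E * (b + \sum_(z <- zs) g z))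
  = c%:E * (((fine (\int[mu]_z (f z)%:E)) ^+ k)%:E * b +
            (k%:R * (fine (\int[mu]_z (f z)%:E)) ^+ k.-1)%:E
              * \int[mu]_z ((f z)%:E * g z)).
Proof.
move=> f0 mf fi g0 mg.
set J := fine _; set Jg := \int[mu]_z _.
have J0 : (0 <= J)%R by rewrite fine_ge0// integral_ge0// => z _; rewrite lee_fin.
have Jg0 : 0 <= Jg by apply: integral_ge0 => z _; rewrite mule_ge0 ?lee_fin.
elim: k c b => [|k IH] c b c0 b0 /=.
  by rewrite !big_nil expr0 mul0r mul0e adde0 mul1e mule1 adde0.
transitivity (\int[mu]_z ((c * f z)%:E *
    (((J ^+ k)%:E * b + (k%:R * J ^+ k.-1)%:E * Jg) + (J ^+ k)%:E * g z))).
  apply: eq_integral => z _.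
  rewrite addeAC -ge0_muleDr// -IH ?mulr_ge0 ?adde_ge0//.
  congr (multint _ _ _); apply/funext => zs.
  by rewrite !big_cons addeA !EFinM muleA.
rewrite integral_affine ?exprn_ge0 ?adde_ge0 ?mule_ge0 ?lee_fin ?mulr_ge0 ?exprn_ge0//.
congr (_ * _); rewrite -/J ge0_muleDr ?mule_ge0 ?lee_fin ?mulr_ge0 ?exprn_ge0//.
rewrite !muleA -!EFinM -addeA -ge0_muleDl ?lee_fin ?mulr_ge0 ?exprn_ge0// -EFinD.
congr (_%:E * _ + _%:E * _); first by rewrite exprS.
by case: k {IH} => [|k] /=; rewrite ?exprS; ring.
Qed.

End multint_moments.

Lemma eseries_EFin (R : realType) (u : nat -> R) (l : R) :
  series u @ \oo --> l -> \sum_(0 <= k <oo) (u k)%:E = l%:E.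
Proof.
move=> ul; apply/cvg_lim => //.
rewrite (_ : (fun n => _) = EFin \o series u); last first.
  by apply/funext => n; rewrite /= sumEFin.
exact: cvg_comp ul _.
Qed.

Lemma nneseriesZr_cvg (R : realType) (r : nat -> R) (l : R) (x : \bar R) :
  (forall k, 0 <= r k)%R -> 0 <= x -> series r @ \oo --> l ->
  \sum_(0 <= k <oo) ((r k)%:E * x) = l%:E * x.
Proof.
move=> r0 x0 rl; case: x x0 => [x _|_|//].
  under eq_fun do under eq_bigr do rewrite -EFinM.
  apply: eseries_EFin.
  rewrite (_ : series _ = (fun n => series r n * x)%R); first exact: cvgMr_tmp.
  by apply/funext => n /=; rewrite mulr_suml.
have nd : nondecreasing_seq (series r).
  by apply/nondecreasing_seqP => n; rewrite /series /= big_nat_recr//= lerDl.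
have r_le k : (r k <= l)%R.
  rewrite -(cvg_lim _ rl)//; apply: le_trans (nondecreasing_cvgn_le nd (cvgP _ rl) k.+1).
  by rewrite /series /= big_nat_recr//= lerDr sumr_ge0.
have [[k rk]|r_neq0] := pselect (exists k, r k != 0%R).
  have rk_gt0 : (0 < r k)%R by rewrite lt_neqAle eq_sym rk r0.
  rewrite gt0_muley ?lte_fin ?(lt_le_trans rk_gt0)//.
  apply: (nneseries_pinfty (k := k)) => //.
    by move=> n _; rewrite mule_ge0// lee_fin.
  by rewrite gt0_muley// lte_fin.
have r_eq0 k : r k = 0%R by apply: contra_notP r_neq0 => /eqP ?; exists k.
have -> : l = 0%R.
  rewrite -(cvg_lim _ rl)// (_ : series r = cst 0%R) ?lim_cst//.
  by apply/funext => n; rewrite /series /= big1.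
by rewrite mul0e eseries0// => k _ _; rewrite r_eq0 mul0e.
Qed.

Lemma cvg_series_exp_coeff_deriv (R : realType) (x : R) :
  series (fun k => k%:R * x ^+ k.-1 / k`!%:R)%R @ \oo --> expR x.
Proof.
rewrite -cvg_shiftS /=.
have -> : (fun n => series (fun k => k%:R * x ^+ k.-1 / k`!%:R)%R n.+1) =
          series (exp_coeff x).
  apply/funext => n; rewrite /series /= big_nat_recl//= mul0r mul0r add0r.
  apply: eq_bigr => k _; rewrite /exp_coeff /= factS natrM invfM mulrA.
  by rewrite [(k.+1%:R * _)%R]mulrC mulfK ?pnatr_eq0.
exact: is_cvg_series_exp_coeff.
Qed.

Lemma nneseries_exp_coeff_affine (R : realType) (x c : R) (b e : \bar R) :
  (0 <= x)%R -> (0 <= c)%R -> 0 <= b -> 0 <= e ->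
  \sum_(0 <= k <oo) ((c * exp_coeff x k)%:E * b +
                     (c * (k%:R * x ^+ k.-1 / k`!%:R))%:E * e) =
  (c * expR x)%:E * b + (c * expR x)%:E * e.
Proof.
move=> x0 c0 b0 e0.
rewrite nneseriesD; last 2 first.
- by move=> k _ _; rewrite mule_ge0// lee_fin mulr_ge0// divr_ge0// exprn_ge0.
- by move=> k _ _; rewrite mule_ge0// lee_fin mulr_ge0// divr_ge0// mulr_ge0// exprn_ge0.
congr (_ + _); apply: nneseriesZr_cvg => //.
- by move=> k; rewrite mulr_ge0// divr_ge0// exprn_ge0.
- rewrite (_ : series _ = (fun n => c * series (exp_coeff x) n)%R).
    by apply: cvgMl_tmp; exact: is_cvg_series_exp_coeff.
  by apply/funext => n /=; rewrite mulr_sumr.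
- by move=> k; rewrite mulr_ge0// divr_ge0// mulr_ge0// exprn_ge0.
- rewrite (_ : series _ = (fun n =>
      c * series (fun k => k%:R * x ^+ k.-1 / k`!%:R) n)%R).
    by apply: cvgMl_tmp; exact: cvg_series_exp_coeff_deriv.
  by apply/funext => n /=; rewrite mulr_sumr.
Qed.

Lemma ereal_sup_shiftS (R : realType) (u : (\bar R)^nat) :
  nondecreasing_seq u -> ereal_sup (range (fun n => u n.+1)) = limn u.
Proof.
move=> nd; have ndS : nondecreasing_seq (fun n => u n.+1) by move=> m n mn; apply: nd.
have : u @ \oo --> ereal_sup (range (fun n => u n.+1)).
  by rewrite -cvg_shiftS; exact: ereal_nondecreasing_cvgn.
by move/cvg_lim => ->.
Qed.

Lemma sume1D (R : numDomainType) (I : Type) (s : seq I) (h : I -> \bar R) :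
  \sum_(i <- s) (1 + h i) = ((size s)%:R)%:E + \sum_(i <- s) h i.
Proof.
elim: s => [|i s IH]; first by rewrite !big_nil adde0.
by rewrite !big_cons IH /= mulrS EFinD -!addeA; congr (_ + _); rewrite addeCA.
Qed.

Lemma prodr_nil0 (R : nzSemiRingType) (I : Type) (s : seq I) :
  (\prod_(i <- s) (0 : R) = (nilp s)%:R)%R.
Proof. by case: s => [|i s]; rewrite ?big_nil ?big_cons ?mul0r. Qed.

Section branching.
Context d (T : measurableType d) (R : realType) (mu : {measure set T -> \bar R})
  (kappa : T -> T -> R).
Hypothesis mu_fin : mu setT < +oo.
Hypothesis kappa_ge0 : forall x y, (0 <= kappa x y)%R.
Hypothesis kappa_meas : measurable_fun setT (fun p : T * T => kappa p.1 p.2).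
Hypothesis kappa_int : forall x, \int[mu]_y (kappa x y)%:E < +oo.

(* Tonelli's measurability lemma needs [mu] as a finite measure. *)
Definition mu_finite : set T -> \bar R := mu.
HB.instance Definition _ := Measure.on mu_finite.
HB.instance Definition _ :=
  @Measure_isFinite.Build d T R mu_finite (lty_fin_num_fun mu_fin).

Lemma measurable_kappa y : measurable_fun setT (kappa y).
Proof. exact: measurableT_comp kappa_meas (pair1_measurable y). Qed.

Lemma measurable_Tk f : measurable_fun setT f -> (forall x, 0 <= f x) ->
  measurable_fun setT (Tk mu kappa f).
Proof.
move=> mf f0.
have := @measurable_fun_fubini_tonelli_F _ _ T T R mu_finite
  (fun p => (kappa p.1 p.2)%:E * f p.2); apply.
- apply: emeasurable_funM; first exact/measurable_EFinP.
  exact: measurableT_comp mf measurable_snd.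
- by move=> p; rewrite mule_ge0// lee_fin.
Qed.

Lemma Tk_ge0 f x : (forall z, 0 <= f z) -> 0 <= Tk mu kappa f x.
Proof. by move=> f0; apply: integral_ge0 => z _; rewrite mule_ge0// lee_fin. Qed.

Lemma le_Tk f g x : measurable_fun setT f -> measurable_fun setT g ->
  (forall z, 0 <= f z) -> (forall z, f z <= g z) -> Tk mu kappa f x <= Tk mu kappa g x.
Proof.
move=> mf mg f0 fg; apply: ge0_le_integral => //.
- by move=> z _; rewrite mule_ge0// lee_fin.
- by apply: emeasurable_funM => //; exact/measurable_EFinP/measurable_kappa.
- by apply: emeasurable_funM => //; exact/measurable_EFinP/measurable_kappa.
- by move=> z _; rewrite lee_wpmul2l// lee_fin.
Qed.

Lemma Tk_sum (F : nat -> T -> \bar R) n x : (forall j, measurable_fun setT (F j)) ->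
  (forall j z, 0 <= F j z) ->
  Tk mu kappa (fun z => \sum_(0 <= j < n) F j z) x = \sum_(0 <= j < n) Tk mu kappa (F j) x.
Proof.
move=> mF F0; rewrite /Tk.
under eq_integral do rewrite ge0_sume_distrr//.
rewrite ge0_integral_sum// => [j|j z _]; last by rewrite mule_ge0// lee_fin.
by apply: emeasurable_funM => //; exact/measurable_EFinP/measurable_kappa.
Qed.

Lemma Tk_nondecreasing_cvg (F : nat -> T -> \bar R) (f : T -> \bar R) x :
  (forall n, measurable_fun setT (F n)) -> (forall n z, 0 <= F n z) ->
  (forall z, nondecreasing_seq (F ^~ z)) -> (forall z, F ^~ z @ \oo --> f z) ->
  Tk mu kappa (F n) x @[n --> \oo] --> Tk mu kappa f x.
Proof.
move=> mF F0 ndF Ff.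
have -> : Tk mu kappa f x = \int[mu]_z limn (fun n => (kappa x z)%:E * F n z).
  by apply: eq_integral => z _; apply/esym/cvg_lim => //; exact: cvgeZl.
apply: cvg_monotone_convergence => //.
- by move=> n; apply: emeasurable_funM => //; exact/measurable_EFinP/measurable_kappa.
- by move=> n z _; rewrite mule_ge0// lee_fin.
- by move=> z _ m n mn; rewrite lee_wpmul2l ?lee_fin ?ndF.
Qed.

Lemma measurable_lam : measurable_fun setT (lam mu kappa).
Proof.
apply: measurableT_comp => //.
have := @measurable_Tk (cst 1) (measurable_cst _) (fun _ => lee01).
by apply: eq_measurable_fun => y _; apply: eq_integral => z _; rewrite mule1.
Qed.

Lemma integrable_kappa y : mu.-integrable setT (EFin \o kappa y).
Proof.
apply/integrableP; split; first exact/measurable_EFinP/measurable_kappa.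
rewrite (eq_integral (fun z => (kappa y z)%:E)) ?kappa_int// => z _.
by rewrite /= ger0_norm.
Qed.

Definition prob_fun (phi : T -> R) :=
  measurable_fun setT phi /\ forall z, (0 <= phi z <= 1)%R.

Lemma prob_fun0 : prob_fun (cst 0%R).
Proof. by split=> [|z]; [exact: measurable_cst|rewrite lexx ler01]. Qed.

Lemma prob_fun1 : prob_fun (cst 1%R).
Proof. by split=> [|z]; [exact: measurable_cst|rewrite lexx ler01]. Qed.

Lemma integrable_kappaM y (phi : T -> R) : prob_fun phi ->
  mu.-integrable setT (EFin \o (fun z => kappa y z * phi z)%R).
Proof.
move=> [mphi phi01]; apply: le_integrable (integrable_kappa y) => //.
  by apply/measurable_EFinP; apply: measurable_funM => //; exact: measurable_kappa.
move=> z _ /=; have /andP[p0 p1] := phi01 z.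
by rewrite lee_fin !ger0_norm ?mulr_ge0// ler_piMr.
Qed.

Definition offspring_pgf (phi : T -> R) (y : T) : R :=
  expR (fine (\int[mu]_z (kappa y z * phi z)%:E) - lam mu kappa y).

Lemma offspring_pgf1 : offspring_pgf (cst 1%R) = cst 1%R.
Proof.
apply/funext => y; rewrite /offspring_pgf /lam.
under eq_integral do rewrite /= mulr1.
by rewrite subrr expR0.
Qed.

Lemma le_offspring_pgf (phi psi : T -> R) y : prob_fun phi -> prob_fun psi ->
  (forall z, phi z <= psi z)%R -> (offspring_pgf phi y <= offspring_pgf psi y)%R.
Proof.
move=> Pphi Ppsi le_phi; rewrite /offspring_pgf ler_expR lerD2r.
apply: fine_le; [exact: integrable_fin_num (integrable_kappaM y _ Pphi)|
                 exact: integrable_fin_num (integrable_kappaM y _ Ppsi)|].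
have [[mphi phi01] [mpsi _]] := (Pphi, Ppsi).
apply: ge0_le_integral => //.
- by move=> z _; have /andP[? _] := phi01 z; rewrite lee_fin mulr_ge0.
- by apply/measurable_EFinP; apply: measurable_funM => //; exact: measurable_kappa.
- by apply/measurable_EFinP; apply: measurable_funM => //; exact: measurable_kappa.
- by move=> z _; rewrite lee_fin ler_wpM2l.
Qed.

Lemma prob_fun_offspring_pgf phi : prob_fun phi -> prob_fun (offspring_pgf phi).
Proof.
move=> [mphi phi01]; split.
  apply: measurableT_comp (@measurable_expR R) _.
  apply: measurable_funB measurable_lam; apply: measurableT_comp => //.
  have mphiE : measurable_fun setT (EFin \o phi) by exact/measurable_EFinP.
  have := @measurable_Tk (EFin \o phi) mphiE (fun z => proj1 (andP (phi01 z))).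
  by apply: eq_measurable_fun => y _; apply: eq_integral => z _; rewrite EFinM.
move=> y; rewrite expR_ge0 -[X in (_ <= X)%R](congr1 (@^~ y) offspring_pgf1).
apply: le_offspring_pgf; [by []|exact: prob_fun1|].
by move=> z; have /andP[] := phi01 z.
Qed.

Lemma prob_fun_iter_pgf {q : T -> R} n : prob_fun q -> prob_fun (iter n offspring_pgf q).
Proof. by move=> Pq; elim: n => //= n; exact: prob_fun_offspring_pgf. Qed.

Lemma childE_prod y (phi : T -> R) (a b : R) : prob_fun phi ->
  childE mu kappa y (fun cs => (a + b * \prod_(z <- cs) phi z)%:E) =
  (a + b * offspring_pgf phi y)%:E.
Proof.
move=> Pphi; rewrite /childE.
set L := lam mu kappa y; pose I := fine (\int[mu]_z (kappa y z * phi z)%:E).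
transitivity ((expR (- L))%:E * (a * expR L + b * expR I)%:E); last first.
  rewrite -EFinM /offspring_pgf -/I -/L; congr (_%:E).
  rewrite mulrDr mulrCA -expRD addNr expR0 mulr1 mulrCA -expRD.
  by rewrite [(- L + I)%R]addrC.
congr (_ * _).
transitivity (\sum_(0 <= k <oo) (((k`!%:R)^-1 * (a * L ^+ k + b * I ^+ k))%:E)).
  congr (limn _); apply/funext => n; apply: eq_bigr => k _.
  rewrite EFinM; congr (_ * _).
  rewrite (_ : (fun zs => _) = (fun zs => (a * \prod_(z <- zs) kappa y z +
      b * \prod_(z <- zs) (kappa y z * phi z))%:E)); last first.
    by apply/funext => zs; rewrite -EFinM big_split /=; congr (_%:E); ring.
  by rewrite multint_prod_lin//; [exact: integrable_kappa|exact: integrable_kappaM].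
apply: eseries_EFin.
have -> : series (fun k => (k`!%:R)^-1 * (a * L ^+ k + b * I ^+ k))%R =
   (fun n => a * series (exp_coeff L) n + b * series (exp_coeff I) n)%R.
  apply/funext => n /=; rewrite !mulr_sumr -big_split /=.
  by apply: eq_bigr => k _; rewrite /exp_coeff /=; ring.
by apply: cvgD; apply: cvgMl_tmp; exact: is_cvg_series_exp_coeff.
Qed.

Lemma childE_prod_sum y (phi : T -> R) (g : T -> \bar R) (c : R) (b : \bar R) :
  prob_fun phi -> measurable_fun setT g -> (forall z, 0 <= g z) -> (0 <= c)%R -> 0 <= b ->
  childE mu kappa y (fun cs => c%:E * (\prod_(z <- cs) phi z)%:E * (b + \sum_(z <- cs) g z)) =
  c%:E * (offspring_pgf phi y)%:E * (b + Tk mu kappa (fun z => (phi z)%:E * g z) y).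
Proof.
move=> Pphi mg g0 c0 b0; have [mphi phi01] := Pphi.
have phi0 z : (0 <= phi z)%R by have /andP[] := phi01 z.
rewrite /childE; set L := lam mu kappa y.
pose I := fine (\int[mu]_z (kappa y z * phi z)%:E).
set Jg := Tk mu kappa _ y.
have JgE : Jg = \int[mu]_z ((kappa y z * phi z)%:E * g z).
  by apply: eq_integral => z _; rewrite EFinM muleA.
have Jg0 : 0 <= Jg by apply: Tk_ge0 => z; rewrite mule_ge0// lee_fin.
have I0 : (0 <= I)%R.
  by rewrite fine_ge0// integral_ge0// => z _; rewrite lee_fin mulr_ge0.
transitivity ((expR (- L))%:E * ((c * expR I)%:E * b + (c * expR I)%:E * Jg)).
  congr (_ * _).
  rewrite -nneseries_exp_coeff_affine//; apply: eq_eseriesr => k _.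
  rewrite (_ : (fun zs => _) = (fun zs => c%:E *
      (\prod_(z <- zs) (kappa y z * phi z))%:E * (b + \sum_(z <- zs) g z))); last first.
    apply/funext => zs; rewrite big_split /= EFinM.
    by rewrite muleAC -!muleA; congr (_ * _); rewrite muleCA.
  rewrite multint_prod_sum ?JgE //; last 3 first.
  - by move=> z; rewrite mulr_ge0.
  - by apply: measurable_funM => //; exact: measurable_kappa.
  - exact: integrable_lty (integrable_kappaM y _ Pphi).
  rewrite -/I muleA -EFinM ge0_muleDr; last 2 first.
  - by rewrite mule_ge0// lee_fin exprn_ge0.
  - by rewrite -JgE mule_ge0// lee_fin mulr_ge0// exprn_ge0.
  rewrite !muleA -!EFinM /exp_coeff /=.
  by congr (_%:E * _ + _%:E * _); ring.
rewrite -EFinM (ge0_muleDr (c * offspring_pgf phi y)%:E)//.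
rewrite ge0_muleDr ?mule_ge0 ?lee_fin ?mulr_ge0 ?expR_ge0//.
rewrite !muleA -!EFinM /offspring_pgf -/I -/L.
by have -> : (expR (- L) * (c * expR I) = c * expR (I - L))%R
  by rewrite [(I - L)%R]addrC expRD; ring.
Qed.

Lemma offE_prod zs (phi : T -> R) (a b : R) : prob_fun phi ->
  offE mu kappa zs (fun cs => (a + b * \prod_(z <- cs) phi z)%:E) =
  (a + b * \prod_(y <- zs) offspring_pgf phi y)%:E.
Proof.
move=> Pphi; elim: zs b => [|y ys IH] b /=; first by rewrite !big_nil.
transitivity (childE mu kappa y (fun cs =>
   (a + (b * \prod_(y' <- ys) offspring_pgf phi y') * \prod_(z <- cs) phi z)%:E)).
  congr (childE _ _ _ _); apply/funext => cs.
  transitivity (offE mu kappa ys (fun cs' =>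
     (a + (b * \prod_(z <- cs) phi z) * \prod_(z <- cs') phi z)%:E)).
    by congr (offE _ _ _ _); apply/funext => cs'; rewrite big_cat /= mulrA.
  by rewrite IH; congr (_%:E); ring.
by rewrite childE_prod// big_cons; congr (_%:E); ring.
Qed.

Lemma offE_prod_sum zs (phi : T -> R) (g : T -> \bar R) (c : R) (b : \bar R) :
  prob_fun phi -> measurable_fun setT g -> (forall z, 0 <= g z) -> (0 <= c)%R -> 0 <= b ->
  offE mu kappa zs (fun cs => c%:E * (\prod_(z <- cs) phi z)%:E * (b + \sum_(z <- cs) g z)) =
  c%:E * (\prod_(y <- zs) offspring_pgf phi y)%:E *
  (b + \sum_(y <- zs) Tk mu kappa (fun z => (phi z)%:E * g z) y).
Proof.
move=> Pphi mg g0; have [_ phi01] := Pphi.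
have phi0 z : (0 <= phi z)%R by have /andP[] := phi01 z.
have Tg0 y : 0 <= Tk mu kappa (fun z => (phi z)%:E * g z) y.
  by apply: Tk_ge0 => z; rewrite mule_ge0// lee_fin.
elim: zs c b => [|y ys IH] c b c0 b0 /=; first by rewrite !big_nil.
have PE0 : (0 <= \prod_(y' <- ys) offspring_pgf phi y')%R.
  by apply: prodr_ge0 => *; exact: expR_ge0.
transitivity (childE mu kappa y (fun cs =>
   (c * \prod_(y' <- ys) offspring_pgf phi y')%:E * (\prod_(z <- cs) phi z)%:E *
   ((b + \sum_(y' <- ys) Tk mu kappa (fun z => (phi z)%:E * g z) y') + \sum_(z <- cs) g z))).
  congr (childE _ _ _ _); apply/funext => cs.
  have Pcs0 : (0 <= \prod_(z <- cs) phi z)%R by apply: prodr_ge0.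
  have Scs0 : 0 <= \sum_(z <- cs) g z by apply: sume_ge0.
  transitivity (offE mu kappa ys (fun cs' => (c * \prod_(z <- cs) phi z)%:E *
      (\prod_(z <- cs') phi z)%:E * ((b + \sum_(z <- cs) g z) + \sum_(z <- cs') g z))).
    congr (offE _ _ _ _); apply/funext => cs'.
    by rewrite big_cat big_cat /= addeA EFinM EFinM muleA.
  rewrite IH ?mulr_ge0 ?adde_ge0//.
  by rewrite EFinM EFinM [X in _ * X = _]addeAC; congr (_ * _); exact: muleAC.
rewrite childE_prod_sum ?mulr_ge0 ?adde_ge0 ?sume_ge0//.
rewrite big_cons big_cons -[X in _ * X = _]addeA [X in _ * (_ + X) = _]addeC.
by rewrite -!EFinM; congr (_%:E * _); ring.
Qed.

(* Expected number of descendants in generations 1..n of a particle of type x,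
   each realisation being weighted by the product of q over generation n. *)
Fixpoint descendants (q : T -> R) (n : nat) : T -> \bar R :=
  if n is n'.+1 then
    Tk mu kappa (fun z => (iter n' offspring_pgf q z)%:E * (1 + descendants q n' z))
  else cst 0.

Definition weighted_size (q : T -> R) (n : nat) (x : T) : \bar R :=
  (iter n offspring_pgf q x)%:E * (1 + descendants q n x).

Lemma descendants_ge0 q n x : prob_fun q -> 0 <= descendants q n x.
Proof.
move=> Pq; elim: n x => [|n IH] x //=; apply: Tk_ge0 => z.
have [_ /(_ z)/andP[? _]] := prob_fun_iter_pgf n Pq.
by rewrite mule_ge0 ?adde_ge0// lee_fin.
Qed.

Lemma measurable_descendants q n : prob_fun q -> measurable_fun setT (descendants q n).
Proof.
move=> Pq; elim: n => [|n IH] /=; first exact: measurable_cst.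
have [mQ Q01] := prob_fun_iter_pgf n Pq.
apply: measurable_Tk => [|z].
  apply: emeasurable_funM; first exact/measurable_EFinP.
  by apply: emeasurable_funD => //; exact: measurable_cst.
by have /andP[? _] := Q01 z; rewrite mule_ge0 ?adde_ge0 ?lee_fin ?descendants_ge0.
Qed.

Lemma weighted_size_ge0 q n x : prob_fun q -> 0 <= weighted_size q n x.
Proof.
move=> Pq; have [_ /(_ x)/andP[? _]] := prob_fun_iter_pgf n Pq.
by rewrite mule_ge0 ?adde_ge0 ?lee_fin ?descendants_ge0.
Qed.

Lemma measurable_weighted_size q n : prob_fun q ->
  measurable_fun setT (weighted_size q n).
Proof.
move=> Pq; have [mQ _] := prob_fun_iter_pgf n Pq.
apply: emeasurable_funM; first exact/measurable_EFinP.
by apply: emeasurable_funD; [exact: measurable_cst|exact: measurable_descendants].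
Qed.

Lemma pathE_prod n zs (q : T -> R) (a b : R) : prob_fun q ->
  pathE mu kappa n zs (fun p => (a + b * \prod_(z <- last zs p) q z)%:E) =
  (a + b * \prod_(z <- zs) iter n offspring_pgf q z)%:E.
Proof.
move=> Pq; elim: n zs => [//|n IH] zs /=.
by under eq_fun do rewrite IH; rewrite offE_prod//; exact: prob_fun_iter_pgf.
Qed.

Lemma pathE_prod_size n zs (q : T -> R) (b : \bar R) : prob_fun q -> 0 <= b ->
  pathE mu kappa n zs
    (fun p => (\prod_(z <- last zs p) q z)%:E * (b + ((sumn (map size p))%:R)%:E)) =
  (\prod_(z <- zs) iter n offspring_pgf q z)%:E * (b + \sum_(z <- zs) descendants q n z).
Proof.
move=> Pq; elim: n zs b => [|n IH] zs b b0 /=; first by rewrite big1_eq adde0.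
have Pn := prob_fun_iter_pgf n Pq.
transitivity (offE mu kappa zs (fun cs => 1%:E * (\prod_(z <- cs) iter n offspring_pgf q z)%:E *
   (b + \sum_(z <- cs) (1 + descendants q n z)))).
  congr (offE _ _ _ _); apply/funext => cs.
  rewrite mul1e sume1D addeA -IH ?adde_ge0//.
  by congr (pathE _ _ _ _ _); apply/funext => p /=; rewrite natrD EFinD addeA.
rewrite offE_prod_sum ?mul1e// => [|z]; last by rewrite adde_ge0 ?descendants_ge0.
by apply: emeasurable_funD; [exact: measurable_cst|exact: measurable_descendants].
Qed.

Lemma iter_Tk_ge0 j x : 0 <= iter j (Tk mu kappa) (cst 1) x.
Proof. by elim: j x => [|j IH] x /=; [exact: lee01|exact: Tk_ge0]. Qed.

Lemma measurable_iter_Tk j : measurable_fun setT (iter j (Tk mu kappa) (cst 1)).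
Proof.
elim: j => [|j IH] /=; first exact: measurable_cst.
by apply: measurable_Tk => // z; exact: iter_Tk_ge0.
Qed.

Lemma sum_iter_TkS n x :
  \sum_(0 <= j < n.+1) iter j (Tk mu kappa) (cst 1) x =
  1 + Tk mu kappa (fun z => \sum_(0 <= j < n) iter j (Tk mu kappa) (cst 1) z) x.
Proof.
by rewrite big_nat_recl// Tk_sum// => *; [exact: measurable_iter_Tk|exact: iter_Tk_ge0].
Qed.

Lemma iter_pgf1 n : iter n offspring_pgf (cst 1%R) = cst 1%R.
Proof. by elim: n => //= n ->; exact: offspring_pgf1. Qed.

Lemma descendants1E n x : 1 + descendants (cst 1%R) n x =
  \sum_(0 <= j < n.+1) iter j (Tk mu kappa) (cst 1) x.
Proof.
elim: n x => [|n IH] x; first by rewrite big_nat1 adde0.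
rewrite sum_iter_TkS /= iter_pgf1; congr (1 + Tk _ _ _ _); apply/funext => z.
by rewrite mul1e IH.
Qed.

Lemma chi_xE x : chi_x mu kappa x = \sum_(0 <= j <oo) iter j (Tk mu kappa) (cst 1) x.
Proof.
rewrite /chi_x -ereal_sup_shiftS; last first.
  by apply: ereal_nondecreasing_series => j _ _; exact: iter_Tk_ge0.
suff -> : (fun n => pathE mu kappa n [:: x] popsize) =
    (fun n => \sum_(0 <= j < n.+1) iter j (Tk mu kappa) (cst 1) x) by [].
apply/funext => n; transitivity (pathE mu kappa n [:: x] (fun p => (\prod_(z <- last [:: x] p) cst 1%R z)%:E *
    (1 + ((sumn (map size p))%:R)%:E))).
  by congr (pathE _ _ _ _ _); apply/funext => p; rewrite big1_eq mul1e /popsize natrD EFinD.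
rewrite pathE_prod_size ?lee01//; last exact: prob_fun1.
by rewrite !big_seq1 iter_pgf1 mul1e descendants1E.
Qed.

Lemma integral_chi_x : \int[mu]_x chi_x mu kappa x =
  \sum_(0 <= j <oo) \int[mu]_x iter j (Tk mu kappa) (cst 1) x.
Proof.
under eq_integral do rewrite chi_xE.
by apply: integral_nneseries => // j *; [exact: measurable_iter_Tk|exact: iter_Tk_ge0].
Qed.

Definition extinct_prob (n : nat) : T -> R := iter n offspring_pgf (cst 0%R).

Definition extinct_lim (x : T) : R := limn (extinct_prob ^~ x).

Lemma prob_fun_extinct_prob n : prob_fun (extinct_prob n).
Proof. exact/prob_fun_iter_pgf/prob_fun0. Qed.

Lemma extinct_prob_ge0 n x : (0 <= extinct_prob n x)%R.
Proof. by have [_ /(_ x)/andP[]] := prob_fun_extinct_prob n. Qed.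

Lemma extinct_probS_ge n x : (extinct_prob n x <= extinct_prob n.+1 x)%R.
Proof.
elim: n x => [|n IH] x; first by have [_ /(_ x)/andP[]] := prob_fun_extinct_prob 1.
exact: le_offspring_pgf (prob_fun_extinct_prob n) (prob_fun_extinct_prob n.+1) IH.
Qed.

Lemma nondecreasing_extinct_prob x : nondecreasing_seq (extinct_prob ^~ x).
Proof. by apply/nondecreasing_seqP => n; exact: extinct_probS_ge. Qed.

Lemma extinct_prob_cvg x : extinct_prob ^~ x @ \oo --> extinct_lim x.
Proof.
apply: nondecreasing_is_cvgn; first exact: nondecreasing_extinct_prob.
by exists 1%R => _ [n _ <-]; have [_ /(_ x)/andP[]] := prob_fun_extinct_prob n.
Qed.

Lemma extinct_prob_le_lim n x : (extinct_prob n x <= extinct_lim x)%R.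
Proof.
apply: nondecreasing_cvgn_le; first exact: nondecreasing_extinct_prob.
exact: cvgP (extinct_prob_cvg x).
Qed.

Lemma extinct_lim_gt0 x : (0 < extinct_lim x)%R.
Proof. exact: lt_le_trans (expR_gt0 _) (extinct_prob_le_lim 1 x). Qed.

Lemma measurable_extinct_lim : measurable_fun setT extinct_lim.
Proof.
apply: (measurable_fun_cvg (h := extinct_prob)) => [n|x _].
  by have [] := prob_fun_extinct_prob n.
exact: extinct_prob_cvg.
Qed.

Lemma hatwE x : hatw mu kappa x = (extinct_lim x)%:E.
Proof.
have survivalE n : pathE mu kappa n [:: x]
    (fun p => if extinct_by x p then 0 else 1) = (1 - extinct_prob n x)%:E.
  transitivity (pathE mu kappa n [:: x]
      (fun p => (1 + -1 * \prod_(z <- last [:: x] p) cst 0%R z)%:E)).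
    congr (pathE _ _ _ _ _); apply/funext => p; rewrite /= prodr_nil0 /extinct_by.
    by case: nilp; rewrite /= ?mulr1n ?mulr0n ?mulr1 ?mulr0 ?subrr ?addr0.
  by rewrite pathE_prod ?big_seq1 ?mulN1r//; exact: prob_fun0.
rewrite /hatw /rho_x.
have -> : (fun n => pathE mu kappa n [:: x] (fun p => if extinct_by x p then 0 else 1))
    = (fun n => (1 - extinct_prob n x)%:E) by apply/funext => n; exact: survivalE.
have dec : nonincreasing_seq (fun n => (1 - extinct_prob n x)%:E).
  by apply/nonincreasing_seqP => n; rewrite lee_fin lerB// extinct_probS_ge.
have cvg_surv : (fun n => (1 - extinct_prob n x)%:E) @ \oo --> (1 - extinct_lim x)%:E.
  have h : (fun n => 1 - extinct_prob n x)%R @ \oo --> (1 - extinct_lim x)%R.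
    by apply: cvgB; [exact: cvg_cst|exact: extinct_prob_cvg].
  by rewrite (_ : (fun n => _) = EFin \o (fun n => 1 - extinct_prob n x)%R)//; exact: cvg_comp h _.
rewrite -(cvg_lim _ (ereal_nonincreasing_cvgn dec))// (cvg_lim _ cvg_surv)//.
by rewrite -EFinB; congr (_%:E); ring.
Qed.

Local Notation U n := (descendants (cst 0%R) n).

Lemma descendants0S_ge n x : U n x <= U n.+1 x.
Proof.
elim: n x => [|n IH] x; first exact: descendants_ge0 prob_fun0.
apply: le_Tk => [||z|z]; try exact: measurable_weighted_size prob_fun0.
  exact: weighted_size_ge0 prob_fun0.
apply: lee_pmul; rewrite ?lee_fin ?leeD2l ?adde_ge0 ?descendants_ge0 //.
- exact: extinct_prob_ge0.
- exact: prob_fun0.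
- exact: extinct_probS_ge.
Qed.

Definition size_given_extinct (x : T) : \bar R := limn (fun n => 1 + U n x).

Lemma nondecreasing_descendants0 x : nondecreasing_seq (fun n => 1 + U n x).
Proof. by apply/nondecreasing_seqP => n; rewrite leeD2l// descendants0S_ge. Qed.

Lemma size_given_extinct_cvg x : (fun n => 1 + U n x) @ \oo --> size_given_extinct x.
Proof. exact: ereal_nondecreasing_is_cvgn (nondecreasing_descendants0 x). Qed.

Lemma size_given_extinct_ge0 x : 0 <= size_given_extinct x.
Proof.
apply: lime_ge; first exact: size_given_extinct_cvg.
by apply: nearW => n; rewrite adde_ge0 ?descendants_ge0//; exact: prob_fun0.
Qed.

Lemma measurable_size_given_extinct : measurable_fun setT size_given_extinct.
Proof.
apply: (@emeasurable_fun_cvg _ _ _ setT (fun n x => 1 + U n x)) => [n|x _].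
  apply: emeasurable_funD; first exact: measurable_cst.
  exact: measurable_descendants prob_fun0.
exact: size_given_extinct_cvg.
Qed.

Lemma nondecreasing_weighted_size0 x : nondecreasing_seq (weighted_size (cst 0%R) ^~ x).
Proof.
apply/nondecreasing_seqP => n; apply: lee_pmul.
- by rewrite lee_fin; exact: extinct_prob_ge0.
- by rewrite adde_ge0 ?descendants_ge0//; exact: prob_fun0.
- by rewrite lee_fin; exact: extinct_probS_ge.
- by rewrite leeD2l// descendants0S_ge.
Qed.

Lemma weighted_size0_cvg x :
  weighted_size (cst 0%R) ^~ x @ \oo --> (extinct_lim x)%:E * size_given_extinct x.
Proof.
apply: cvgeM; last exact: size_given_extinct_cvg.
  have := size_given_extinct_ge0 x; case: (size_given_extinct x) => [v||] //= _.
  by rewrite /mule_def gt_eqF// extinct_lim_gt0.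
rewrite (_ : (fun n => _) = EFin \o (extinct_prob ^~ x))//.
exact: cvg_comp (extinct_prob_cvg x) _.
Qed.

Lemma hatw_ge0 x : 0 <= hatw mu kappa x.
Proof. by rewrite hatwE lee_fin ltW// extinct_lim_gt0. Qed.

Lemma measurable_hatw : measurable_fun setT (hatw mu kappa).
Proof.
rewrite (_ : hatw mu kappa = EFin \o extinct_lim).
  exact/measurable_EFinP/measurable_extinct_lim.
by apply/funext => x; rewrite hatwE.
Qed.

(* Monotone convergence in [U n.+1 = Tk (weighted_size 0 n)], where
   [weighted_size 0 n] increases to [extinct_lim * size_given_extinct]. *)
Lemma size_given_extinct_fix x :
  size_given_extinct x = 1 + That mu kappa size_given_extinct x.
Proof.
have cvgS : (fun n => 1 + U n.+1 x) @ \oo --> size_given_extinct x.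
  by have := size_given_extinct_cvg x; rewrite -cvg_shiftS.
rewrite -(cvg_lim _ cvgS)//; apply/cvg_lim => //.
apply: cvgeD; [exact: fin_num_adde_defr|exact: cvg_cst|].
have -> : That mu kappa size_given_extinct x =
    Tk mu kappa (fun z => (extinct_lim z)%:E * size_given_extinct z) x.
  by apply: eq_integral => z _; rewrite hatwE (muleC (size_given_extinct z)).
apply: Tk_nondecreasing_cvg => [n|n z|z|z].
- exact: measurable_weighted_size prob_fun0.
- exact: weighted_size_ge0 prob_fun0.
- exact: nondecreasing_weighted_size0.
- exact: weighted_size0_cvg.
Qed.

Lemma iter_That_ge0 j x : 0 <= iter j (That mu kappa) (cst 1) x.
Proof.
elim: j x => [|j IH] x /=; first exact: lee01.
by apply: Tk_ge0 => z; rewrite mule_ge0 ?hatw_ge0.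
Qed.

Lemma measurable_iter_That j : measurable_fun setT (iter j (That mu kappa) (cst 1)).
Proof.
elim: j => [|j IH] /=; first exact: measurable_cst.
apply: measurable_Tk => [|z]; first exact: emeasurable_funM IH measurable_hatw.
by rewrite mule_ge0 ?iter_That_ge0 ?hatw_ge0.
Qed.

Lemma sum_iter_ThatS n x :
  \sum_(0 <= j < n.+1) iter j (That mu kappa) (cst 1) x =
  1 + That mu kappa (fun z => \sum_(0 <= j < n) iter j (That mu kappa) (cst 1) z) x.
Proof.
rewrite big_nat_recl// [X in _ = _ + X]/That.
rewrite (_ : (fun z => _ * hatw mu kappa z) = fun z =>
    \sum_(0 <= j < n) (iter j (That mu kappa) (cst 1) z * hatw mu kappa z)); last first.
  by apply/funext => z; rewrite ge0_sume_distrl// => j _; exact: iter_That_ge0.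
rewrite Tk_sum// => [j|j z]; last by rewrite mule_ge0 ?iter_That_ge0 ?hatw_ge0.
exact: emeasurable_funM (measurable_iter_That j) measurable_hatw.
Qed.

Lemma sum_iter_That_le m x :
  \sum_(0 <= j < m) iter j (That mu kappa) (cst 1) x <= size_given_extinct x.
Proof.
elim: m x => [|m IH] x; first by rewrite big_geq// size_given_extinct_ge0.
rewrite sum_iter_ThatS size_given_extinct_fix leeD2l//.
apply: le_Tk => [||z|z].
- apply: emeasurable_funM measurable_hatw.
  by apply: emeasurable_sum => j; exact: measurable_iter_That.
- exact: emeasurable_funM measurable_size_given_extinct measurable_hatw.
- by rewrite mule_ge0 ?hatw_ge0 ?sume_ge0// => j _; exact: iter_That_ge0.
- by rewrite lee_wpmul2r ?hatw_ge0 ?IH.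
Qed.

Lemma descendants0_le_sum n x :
  1 + U n x <= \sum_(0 <= j < n.+1) iter j (That mu kappa) (cst 1) x.
Proof.
elim: n x => [|n IH] x; first by rewrite big_nat1 adde0.
rewrite sum_iter_ThatS leeD2l//.
apply: le_Tk => [||z|z].
- exact: measurable_weighted_size prob_fun0.
- apply: emeasurable_funM measurable_hatw.
  by apply: emeasurable_sum => j; exact: measurable_iter_That.
- exact: weighted_size_ge0 prob_fun0.
- rewrite /weighted_size hatwE muleC; apply: lee_pmul.
  + by rewrite adde_ge0 ?descendants_ge0//; exact: prob_fun0.
  + by rewrite lee_fin; exact: extinct_prob_ge0.
  + exact: IH.
  + by rewrite lee_fin; exact: extinct_prob_le_lim.
Qed.

Lemma size_given_extinctE x :
  size_given_extinct x = \sum_(0 <= j <oo) iter j (That mu kappa) (cst 1) x.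
Proof.
set S := fun n => \sum_(0 <= j < n) iter j (That mu kappa) (cst 1) x.
have cvgS : S @ \oo --> limn S.
  apply/ereal_nondecreasing_is_cvgn/ereal_nondecreasing_series => j _ _.
  exact: iter_That_ge0.
apply/le_anti/andP; split; last first.
  by apply: lime_le cvgS _; apply: nearW => n; exact: sum_iter_That_le.
have cvgSS : (fun n => S n.+1) @ \oo --> limn S by have := cvgS; rewrite -cvg_shiftS.
rewrite -(cvg_lim _ cvgSS)//.
apply: lee_lim; [exact: size_given_extinct_cvg|exact: cvgP cvgSS|].
by apply: nearW => n; exact: descendants0_le_sum.
Qed.

Lemma chihat_xE x : chihat_x mu kappa x =
  hatw mu kappa x * \sum_(0 <= j <oo) iter j (That mu kappa) (cst 1) x.
Proof.
rewrite /chihat_x hatwE -size_given_extinctE.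
suff -> : (fun n => pathE mu kappa n [:: x]
      (fun p => if extinct_by x p then popsize p else 0)) = weighted_size (cst 0%R) ^~ x.
  rewrite -(cvg_lim _ (ereal_nondecreasing_cvgn (nondecreasing_weighted_size0 x)))//.
  exact: cvg_lim (weighted_size0_cvg x).
apply/funext => n; transitivity (pathE mu kappa n [:: x]
  (fun p => (\prod_(z <- last [:: x] p) cst 0%R z)%:E * (1 + ((sumn (map size p))%:R)%:E))).
  congr (pathE _ _ _ _ _); apply/funext => p.
  rewrite /= prodr_nil0 /extinct_by /popsize natrD EFinD.
  by case: nilp; rewrite /= ?mulr1n ?mulr0n ?mul1e ?mul0e.
by rewrite pathE_prod_size ?lee01//; [rewrite !big_seq1|exact: prob_fun0].
Qed.

Lemma integral_chihat_x : \int[mu]_x chihat_x mu kappa x =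
  \sum_(0 <= j <oo) wint mu (hatw mu kappa) (iter j (That mu kappa) (cst 1)).
Proof.
transitivity (\int[mu]_x \sum_(0 <= j <oo)
                 (hatw mu kappa x * iter j (That mu kappa) (cst 1) x)).
  apply: eq_integral => x _; rewrite chihat_xE hatwE nneseriesZl// => j _.
  exact: iter_That_ge0.
rewrite integral_nneseries// => [j|j x _]; last by rewrite mule_ge0 ?hatw_ge0 ?iter_That_ge0.
exact: emeasurable_funM measurable_hatw (measurable_iter_That j).
Qed.

End branching.

Lemma wint_cst1 d (T : measurableType d) (R : realType) (mu : {measure set T -> \bar R})
    (f : T -> \bar R) :
  wint mu (cst 1) f = \int[mu]_x f x.
Proof. by apply: eq_integral => x _; rewrite mul1e. Qed.

Lemma wip_cst1 d (T : measurableType d) (R : realType) (mu : {measure set T -> \bar R})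
    (w f : T -> \bar R) :
  wip mu w f (cst 1) = wint mu w f.
Proof. by apply: eq_integral => x _; rewrite mule1. Qed.

Theorem lemma3p1 (d : measure_display) (T : measurableType d) (R : realType)
  (mu : {measure set T -> \bar R}) (kappa : T -> T -> R) :
  0 < mu setT < +oo ->
  (forall x y, (0 <= kappa x y)%R) ->
  (forall x y, kappa x y = kappa y x) ->
  measurable_fun setT (fun p : T * T => kappa p.1 p.2) ->
  (forall x, \int[mu]_y (kappa x y)%:E < +oo) ->
  \int[mu \x mu]_p (kappa p.1 p.2)%:E < +oo ->
  (forall x, chi_x mu kappa x
             = \sum_(0 <= j <oo) iter j (Tk mu kappa) (cst 1) x) /\
  (chi_avg mu kappa
     = ((fine (mu setT))^-1)%:E *
       \sum_(0 <= j <oo) wint mu (cst 1) (iter j (Tk mu kappa) (cst 1)) /\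
   chi_avg mu kappa
     = ((fine (mu setT))^-1)%:E *
       \sum_(0 <= j <oo) wip mu (cst 1) (iter j (Tk mu kappa) (cst 1)) (cst 1)) /\
  (forall x, chihat_x mu kappa x
             = hatw mu kappa x *
               \sum_(0 <= j <oo) iter j (That mu kappa) (cst 1) x) /\
  (chihat_avg mu kappa
     = ((fine (mu setT))^-1)%:E *
       \sum_(0 <= j <oo) wint mu (hatw mu kappa) (iter j (That mu kappa) (cst 1)) /\
   chihat_avg mu kappa
     = ((fine (mu setT))^-1)%:E *
       \sum_(0 <= j <oo)
          wip mu (hatw mu kappa) (iter j (That mu kappa) (cst 1)) (cst 1)).
Proof.
move=> /andP[_ mu_fin] kappa_ge0 _ kappa_meas kappa_int _.
split; first exact: chi_xE.
split.
  rewrite /chi_avg integral_chi_x//.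
  by split; congr (_ * _); apply: eq_eseriesr => j _; rewrite ?wip_cst1 wint_cst1.
split; first exact: chihat_xE.
rewrite /chihat_avg integral_chihat_x//.
by split; congr (_ * _); apply: eq_eseriesr => j _; rewrite wip_cst1.
Qed.
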